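(* Let $p$ be a prime, $n\ge 1$, and let $A_r$ and $A_s$ be symmetric $n\times n$ matrices with entries in $\mathbb{Z}_p$. If $\det(A_r-A_s)\neq 0 \pmod p$, then the graph-state bases $\mathcal{B}_{A_r}$ and $\mathcal{B}_{A_s}$ of $(\mathbb{C}^p)^{\otimes n}$ are mutually unbiased, i.e. $|\langle G_{A_r}(m_1,\dots,m_n)|G_{A_s}(m'_1,\dots,m'_n)\rangle|^2 = 1/p^n$ for all $m_i,m'_i\in\mathbb{Z}_p$.
   Context: Let $\omega_p=e^{2\pi i/p}$. On $\mathbb{C}^p$ with computational basis $\{|0\rangle,\dots,|p-1\rangle\}$ let $|+\rangle=p^{-1/2}\sum_{k=0}^{p-1}|k\rangle$ and $Z=\sum_k \omega_p^k|k\rangle\langle k|$. On $(\mathbb{C}^p)^{\otimes n}$ define the one-qupit phase gates $U_{i,i}=\sum_{k=0}^{1} i^k|k\rangle\langle k|_i$ if $p=2$ (here $i=\sqrt{-1}$ in the phase) and $U_{i,i}=\sum_{k=0}^{p-1}\omega_p^{k(k-1)/2}|k\rangle\langle k|_i$ if $p\ge 3$, and for $i\neq j$ the controlled-phase gates $U_{i,j}=\sum_{k,l=0}^{p-1}\omega_p^{kl}|k\rangle\langle k|_i\otimes|l\rangle\langle l|_j$ (subscripts indicate the tensor factor acted upon). For a symmetric $n\times n$ matrix $A$ over $\mathbb{Z}_p$ (entries viewed as integers in $\{0,\dots,p-1\}$), the generalized graph state is $|G_A\rangle=\prod_{i\le j}U_{i,j}^{A_{i,j}}|+\rangle^{\otimes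 n}$, and the graph-state basis is $\mathcal{B}_A=\{|G_A(m_1,\dots,m_n)\rangle\}_{m_i\in\mathbb{Z}_p}$ with $|G_A(m_1,\dots,m_n)\rangle=Z^{m_1}\otimes\cdots\otimes Z^{m_n}|G_A\rangle$. Two orthonormal bases of $\mathbb{C}^d$ are mutually unbiased if every element of one has squared overlap $1/d$ with every element of the other. *)

From HB Require Import structures.
From mathcomp Require Import all_boot all_order all_algebra.
From mathcomp Require Import complex.
From mathcomp Require Import reals trigo.
Set Implicit Arguments. Unset Strict Implicit. Unset Printing Implicit Defensive.
Import GRing.Theory Num.Theory.
Local Open Scope ring_scope.

(* omega_p = e^{2 pi i / p} = cos(2pi/p) + i sin(2pi/p) *)
Definition omega (R : realType) (p : nat) : R[i] :=
  (cos (2 * pi / p%:R) +i* sin (2 * pi / p%:R))%C.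

(* Computational basis labels of (C^p)^{\otimes n}: x = (x_1,...,x_n), x_i in {0..p-1}. *)
Definition cbasis (p n : nat) := {ffun 'I_n -> 'I_p}.

(* A vector of (C^p)^{\otimes n}, given by its coordinates in the computational basis. *)
Definition qstate (R : realType) (p n : nat) := cbasis p n -> R[i].

Definition braket (R : realType) (p n : nat) (u v : qstate R p n) : R[i] :=
  \sum_(x : cbasis p n) (u x)^* * v x.

Definition plus_n (R : realType) (p n : nat) : qstate R p n :=
  fun _ => (sqrtC (p%:R : R[i]))^-1 ^+ n.

Definition apply_diag (R : realType) (p n : nat) (d : cbasis p n -> R[i])
  (v : qstate R p n) : qstate R p n := fun x => d x * v x.

Definition U_diag (R : realType) (p n : nat) (i j : 'I_n) (x : cbasis p n) : R[i] :=
  if i == j then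
    (if p == 2%N then ('i%C) ^+ (x i : nat)
     else omega R p ^+ (((x i : nat) * (x i : nat).-1) %/ 2))
  else omega R p ^+ ((x i : nat) * (x j : nat)).

Definition Z_diag (R : realType) (p n : nat) (m : 'I_n -> 'F_p) (x : cbasis p n) : R[i] :=
  \prod_(i < n) omega R p ^+ ((m i : nat) * (x i : nat)).

(* |G_A> = prod_{i<=j} U_{i,j}^{A_{i,j}} |+>^{\otimes n}; the gates are diagonal,
   so their product is the diagonal operator with the product of diagonals. *)
Definition graph_state (R : realType) (p n : nat) (A : 'M['F_p]_n) : qstate R p n :=
  apply_diag (fun x => \prod_(i < n) \prod_(j < n | (i <= j)%N)
                         U_diag R i j x ^+ (A i j : nat)) (@plus_n R p n).

Definition graph_basis_state (R : realType) (p n : nat) (A : 'M['F_p]_n)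
  (m : 'I_n -> 'F_p) : qstate R p n :=
  apply_diag (Z_diag R m) (graph_state R A).

From HB Require Import structures.
From mathcomp Require Import all_boot all_order all_algebra.
From mathcomp Require Import complex.
From mathcomp Require Import reals trigo.
From mathcomp Require Import ring.
Import Order.TTheory GRing.Theory Num.Theory.
Local Open Scope ring_scope.

(* Every amplitude of |G_A(m)> is p^(-n/2) times a phase: writing chi a = omega^a,
   the Z-part contributes chi (m . x) and the gates a quadratic phase f_A with
   f_A (x + y) = f_A x * f_A y * chi (x A y^T) when A is symmetric.  The overlap
   is therefore p^(-n) times a sum of a unimodular H with
   H (x + y) = H x * H y * chi (x (A_s - A_r) y^T).  Expanding |sum H|^2 and
   using orthogonality of characters, sum_y chi (z . y) = p^n [z = 0], only
   the z with z (A_s - A_r) = 0 survive, i.e. z = 0, so |sum H|^2 = p^n. *)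

Lemma prod_mulconj (C : numClosedFieldType) (I : finType) (P : pred I)
    (F : I -> C) :
  (forall i, P i -> F i * (F i)^* = 1) ->
  (\prod_(i | P i) F i) * (\prod_(i | P i) F i)^* = 1.
Proof. by move=> FP; rewrite rmorph_prod -big_split; apply: big1. Qed.

Lemma expr_mulconj (C : numClosedFieldType) (x : C) k :
  x * x^* = 1 -> x ^+ k * (x ^+ k)^* = 1.
Proof. by move=> xP; rewrite rmorphXn -exprMn xP expr1n. Qed.

Lemma conjM_mulconj (C : numClosedFieldType) (x y : C) :
  x * x^* = 1 -> y * y^* = 1 -> x^* * y * (x^* * y)^* = 1.
Proof.
move=> xP yP; rewrite rmorphM /= conjCK.
by transitivity ((x * x^*) * (y * y^*)); [ring | rewrite xP yP mulr1].
Qed.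

Section GraphStates.
Variables (R : realType) (p : nat).
Hypothesis p_prime : prime p.

Local Notation w := (omega R p).
Let th : R := 2 * pi / p%:R.

Lemma omega_exp k : w ^+ k = (cos (th * k%:R) +i* sin (th * k%:R))%C.
Proof.
elim: k => [|k IHk]; first by rewrite expr0 mulr0 cos0 sin0.
rewrite exprS IHk /omega -/th; simpc.
rewrite -natr1 mulrDr mulr1 cosD sinD.
by congr (_ +i* _)%C; ring.
Qed.

Lemma omega_expp : w ^+ p = 1.
Proof.
by rewrite omega_exp /th divfK ?pnatr_eq0 -?lt0n ?prime_gt0 // mulr_natl cos2pi sin2pi.
Qed.

Lemma omega_neq1 : w != 1.
Proof.
apply/negP => /eqP; rewrite /omega -/th => -[cos_th1 _].
have th_gt0 : 0 < th by rewrite divr_gt0 ?mulr_gt0 ?pi_gt0 ?ltr0n ?prime_gt0.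
have th_le_pi : th <= pi.
  rewrite /th ler_pdivrMr ?ltr0n ?prime_gt0 // mulrC ler_pM2l ?pi_gt0 //.
  by rewrite ler_nat prime_gt1.
have : cos th < cos 0.
  by rewrite ltr_cos // in_itv /= ?lexx ?pi_ge0 ?(ltW th_gt0).
by rewrite cos0 cos_th1 ltxx.
Qed.

Lemma omega_mulconj : w * w^* = 1.
Proof.
rewrite /omega -[(_ +i* _)%C^*]/(cos th +i* - sin th)%C; simpc.
by rewrite -/th -!expr2 cos2Dsin2 (mulrC (cos th)) addNr.
Qed.

Lemma omega_p2 : p = 2%N -> w = -1.
Proof.
move=> ->; rewrite /omega mulrAC divff ?pnatr_eq0 // mul1r cospi sinpi.
by rewrite -[(-1 : R[i])]/(- (1 +i* 0))%C; simpc.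
Qed.

Definition chi (a : 'F_p) : R[i] := w ^+ (a : nat).

Lemma chi_nat k : chi k%:R = w ^+ k.
Proof. by rewrite /chi val_Fp_nat // expr_mod // omega_expp. Qed.

Lemma chiD a b : chi (a + b) = chi a * chi b.
Proof. by rewrite -{1}[a]natr_Zp -{1}[b]natr_Zp -natrD chi_nat exprD. Qed.

Lemma chiM a b : chi (a * b) = w ^+ (a * b)%N.
Proof. by rewrite -{1}[a]natr_Zp -{1}[b]natr_Zp -natrM chi_nat. Qed.

Lemma chi0 : chi 0 = 1.
Proof. by rewrite /chi expr0. Qed.

Lemma chi1 : chi 1 = w.
Proof. by rewrite -[1]/(1%:R) chi_nat expr1. Qed.

Lemma chiX a k : chi a ^+ k = chi (a * k%:R).
Proof. by rewrite -{2}[a]natr_Zp -natrM chi_nat exprM. Qed.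

Lemma chi_sum (I : finType) (P : pred I) (f : I -> 'F_p) :
  \prod_(i | P i) chi (f i) = chi (\sum_(i | P i) f i).
Proof. by rewrite (big_morph chi chiD chi0). Qed.

Lemma chi_mulconj a : chi a * (chi a)^* = 1.
Proof. exact/expr_mulconj/omega_mulconj. Qed.

Lemma chiN a : chi (- a) = (chi a)^*.
Proof. by rewrite -[LHS]mul1r -(chi_mulconj a) mulrAC -chiD subrr chi0 mul1r. Qed.

Definition qphase (a : 'F_p) : R[i] :=
  if p == 2%N then 'i%C ^+ (a : nat) else w ^+ (((a : nat) * (a : nat).-1) %/ 2).

Lemma qphase_mulconj a : qphase a * (qphase a)^* = 1.
Proof.
rewrite /qphase; case: ifP => _; apply: expr_mulconj; last exact: omega_mulconj.
by rewrite -[('i%C : R[i])^*]/(0 +i* -1)%C; simpc.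
Qed.

Lemma Fp_two_neq0 : p != 2%N -> (2%:R : 'F_p) != 0.
Proof. by move=> p_neq2; rewrite -(dvdn_pcharf (pchar_Fp p_prime)) dvdn_prime2. Qed.

Lemma qphase_odd a : p != 2%N -> qphase a = chi (a * (a - 1) / 2%:R).
Proof.
move=> p_neq2; have two_neq0 := Fp_two_neq0 p_neq2.
rewrite /qphase (negbTE p_neq2) -[in RHS](natr_Zp a) -chi_nat.
case: (a : nat) => [|k]; first by rewrite !mul0r.
have two_dvd : (2 %| k.+1 * k)%N by rewrite dvdn2 oddM /= andNb.
congr chi; apply: (mulIf two_neq0).
by rewrite divfK // -natrM divnK // natrM -natr1 addrK.
Qed.

(* For p = 2 this is i^(a + b) = i^a i^b (-1)^(ab) on {0, 1}: i^2 = -1 = omega. *)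
Lemma qphaseD a b : qphase (a + b) = qphase a * qphase b * chi (a * b).
Proof.
have [p2|p_neq2] := eqVneq p 2%N; last first.
  by rewrite !qphase_odd // -!chiD; congr chi; field; exact: Fp_two_neq0.
have a_lt2 : (a < 2)%N by rewrite -p2 -{2}(Fp_cast p_prime) ltn_ord.
have b_lt2 : (b < 2)%N by rewrite -p2 -{2}(Fp_cast p_prime) ltn_ord.
rewrite chiM /qphase (introT eqP p2) -{1}[a]natr_Zp -{1}[b]natr_Zp -natrD val_Fp_nat //.
rewrite (omega_p2 p2).
move: (a : nat) (b : nat) a_lt2 b_lt2; rewrite p2 => -[|[|?]] [|[|?]] //= _ _;
  rewrite ?expr0 ?expr1 ?mulr1 ?mul1r //.
by rewrite -expr2 sqr_i mulrNN mulr1.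
Qed.

Variable n : nat.
Local Notation V := 'rV['F_p]_n.

Definition dot (y v : V) : 'F_p := \sum_(l < n) y 0 l * v 0 l.

Lemma dotBl (y z v : V) : dot (y - z) v = dot y v - dot z v.
Proof. by rewrite /dot -sumrB; apply: eq_bigr => l _; rewrite !mxE mulrBl. Qed.

Lemma sum_chi_dot (y : V) :
  \sum_(v : V) chi (dot y v) = if y == 0 then (p ^ n)%:R else 0.
Proof.
have [->|y_neq0] := eqVneq y 0.
  rewrite (eq_bigr (fun _ => 1)) => [|v _]; last first.
    by rewrite /dot big1 ?chi0 // => l _; rewrite mxE mul0r.
  by rewrite sumr_const card_mx card_Fp // mul1n.
have [k yk_neq0] : exists k, y 0 k != 0.
  apply/existsP; apply: contraNT y_neq0 => /existsPn yk0.
  by apply/eqP/matrixP => i l; rewrite (ord1 i) mxE; apply/eqP/negPn/yk0.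
(* Translating v by a vector with dot product 1 against y multiplies the sum by omega. *)
pose d : V := (y 0 k)^-1 *: delta_mx 0 k.
have dot_yd : dot y d = 1.
  rewrite /dot (bigD1 k) //= big1 ?addr0 => [|l l_neq_k]; last first.
    by rewrite !mxE (negbTE l_neq_k) andbF !mulr0.
  by rewrite !mxE !eqxx mulr1 divff.
set S := \sum_v _.
have S_omega : S = S * w.
  rewrite {1}/S (reindex_inj (addIr d)) /= -chi1 -dot_yd mulr_suml.
  apply: eq_bigr => v _; rewrite -chiD /dot -big_split /=.
  by congr chi; apply: eq_bigr => l _; rewrite mxE mulrDr.
apply/eqP; move/eqP: S_omega; rewrite -subr_eq0 -{1}(mulr1 S) -mulrBr mulf_eq0.
by rewrite subr_eq0 [1 == _]eq_sym (negbTE omega_neq1) orbF.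
Qed.

Lemma bilinear_phase_sum_normsq (H : V -> R[i]) (M : 'M['F_p]_n) :
    M \in unitmx ->
    (forall v, H v * (H v)^* = 1) ->
    (forall z v, H (z + v) = H z * H v * chi (dot (z *m M) v)) ->
  (\sum_v H v) * (\sum_v H v)^* = (p ^ n)%:R.
Proof.
move=> M_unit H_unimod HD.
have H0 : H 0 = 1.
  have H0_neq0 : H 0 != 0.
    apply/eqP => H00; have := H_unimod 0.
    by rewrite H00 mul0r => /esym/eqP; rewrite oner_eq0.
  have dot0 : dot (0 *m M) 0 = 0 by rewrite mul0mx /dot big1 // => l _; rewrite mxE mul0r.
  have := HD 0 0; rewrite addr0 dot0 chi0 mulr1 => H0_idem.
  by apply: (mulIf H0_neq0); rewrite mul1r -H0_idem.
transitivity (\sum_(z : V) H z * \sum_(v : V) chi (dot (z *m M) v)).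
  rewrite rmorph_sum mulr_sumr.
  transitivity (\sum_(v : V) \sum_(z : V) H z * chi (dot (z *m M) v)).
    apply: eq_bigr => v _; rewrite mulr_suml (reindex_inj (addIr v)) /=.
    by apply: eq_bigr => z _; rewrite HD -[RHS]mulr1 -(H_unimod v); ring.
  by rewrite exchange_big; apply: eq_bigr => z _; rewrite mulr_sumr.
rewrite [LHS](bigD1 0) //= [X in _ + X]big1 => [|z z_neq0]; last first.
  rewrite sum_chi_dot; case: eqP => [zM0|]; last by rewrite mulr0.
  by move: z_neq0; rewrite -(mulmxK M_unit z) zM0 mul0mx eqxx.
by rewrite mul0mx sum_chi_dot eqxx H0 mul1r addr0.
Qed.

Definition gate_phase (i j : 'I_n) (u : V) : R[i] :=
  if i == j then qphase (u 0 i) else chi (u 0 i * u 0 j).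

Definition graph_phase (A : 'M['F_p]_n) (u : V) : R[i] :=
  \prod_(i < n) \prod_(j < n | (i <= j)%N) gate_phase i j u ^+ (A i j : nat).

Definition Z_phase (m : 'I_n -> 'F_p) (u : V) : R[i] := \prod_(i < n) chi (m i * u 0 i).

Definition basis_phase (A : 'M['F_p]_n) (m : 'I_n -> 'F_p) (u : V) : R[i] :=
  Z_phase m u * graph_phase A u.

Definition cross_term (i j : 'I_n) (u v : V) : 'F_p :=
  if i == j then u 0 i * v 0 i else u 0 i * v 0 j + v 0 i * u 0 j.

Definition graph_cross (A : 'M['F_p]_n) (u v : V) : 'F_p :=
  \sum_(i < n) \sum_(j < n | (i <= j)%N) A i j * cross_term i j u v.

Lemma gate_phaseD i j u v :
  gate_phase i j (u + v) =
  gate_phase i j u * gate_phase i j v * chi (cross_term i j u v).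
Proof.
rewrite /gate_phase /cross_term !mxE; case: eqP => [->|_]; first exact: qphaseD.
by rewrite -!chiD; congr chi; ring.
Qed.

Lemma graph_phaseD A u v :
  graph_phase A (u + v) = graph_phase A u * graph_phase A v * chi (graph_cross A u v).
Proof.
rewrite /graph_cross -chi_sum; under [in RHS]eq_bigr => i _ do rewrite -chi_sum.
rewrite /graph_phase -!big_split /=; apply: eq_bigr => i _; rewrite -!big_split /=.
apply: eq_bigr => j _.
by rewrite gate_phaseD !exprMn chiX natr_Zp (mulrC (cross_term _ _ _ _)).
Qed.

Lemma graph_cross_sym A u v : A^T = A -> graph_cross A u v = dot (u *m A) v.
Proof.
move=> A_sym; have A_swap k l : A k l = A l k by rewrite -{1}A_sym mxE.
pose f i j := u 0 i * A i j * v 0 j.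
(* Each pair i < j is split into the ordered pairs (i, j) and (j, i). *)
have split_term (i j : 'I_n) : (if (i <= j)%N then A i j * cross_term i j u v else 0) =
    (if (i <= j)%N then f i j else 0) + (if (i < j)%N then f j i else 0).
  rewrite /cross_term /f; case: (ltngtP i j) => [i_lt_j|_|/ord_inj <-].
  - by rewrite ifN ?neq_ltn ?i_lt_j // (A_swap j i); ring.
  - by rewrite addr0.
  - by rewrite eqxx addr0; ring.
transitivity (\sum_(i < n) \sum_(j < n)
    ((if (i <= j)%N then f i j else 0) + (if (i < j)%N then f j i else 0))).
  by apply: eq_bigr => i _; rewrite big_mkcond; apply: eq_bigr => j _; exact: split_term.
under eq_bigr do rewrite big_split /=.
rewrite big_split /= [X in _ + X]exchange_big /= -big_split /=.
rewrite /dot; under [RHS]eq_bigr do rewrite mxE big_distrl /=.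
rewrite [RHS]exchange_big /=; apply: eq_bigr => i _; rewrite -big_split /=.
by apply: eq_bigr => j _; case: leqP => _; rewrite ?addr0 ?add0r.
Qed.

Lemma basis_phaseD A m u v : A^T = A ->
  basis_phase A m (u + v) =
  basis_phase A m u * basis_phase A m v * chi (dot (u *m A) v).
Proof.
move=> A_sym; rewrite /basis_phase graph_phaseD graph_cross_sym //.
have -> : Z_phase m (u + v) = Z_phase m u * Z_phase m v.
  by rewrite /Z_phase -big_split; apply: eq_bigr => i _; rewrite mxE mulrDr chiD.
ring.
Qed.

Lemma basis_phase_mulconj A m u : basis_phase A m u * (basis_phase A m u)^* = 1.
Proof.
rewrite /basis_phase rmorphM /= mulrACA.
rewrite prod_mulconj ?mul1r => [|i _]; last exact: chi_mulconj.
apply: prod_mulconj => i _; apply: prod_mulconj => j _; apply: expr_mulconj.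
by rewrite /gate_phase; case: eqP => _; rewrite ?qphase_mulconj ?chi_mulconj.
Qed.

Definition of_cbasis (x : cbasis p n) : V := \row_i ((x i : nat)%:R).

Lemma val_of_cbasis x i : (of_cbasis x 0 i : nat) = x i.
Proof. by rewrite mxE val_Fp_nat // modn_small. Qed.

Lemma of_cbasis_bij : bijective of_cbasis.
Proof.
apply: inj_card_bij => [x y xy|].
  by apply/ffunP => i; apply: ord_inj; rewrite -!val_of_cbasis xy.
by rewrite card_mx card_Fp // card_ffun !card_ord mul1n.
Qed.

Lemma graph_basis_stateE A m x :
  graph_basis_state R A m x = basis_phase A m (of_cbasis x) * @plus_n R p n x.
Proof.
rewrite /graph_basis_state /graph_state /apply_diag /basis_phase mulrA.
congr (_ * _ * _).
  by apply: eq_bigr => i _; rewrite chiM val_of_cbasis.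
apply: eq_bigr => i _; apply: eq_bigr => j _; congr (_ ^+ _).
rewrite /U_diag /gate_phase /qphase.
by case: eqP => [->|_]; rewrite ?chiM !val_of_cbasis.
Qed.

Lemma braket_graph_basis_state A A' m m' :
  braket (graph_basis_state R A m) (graph_basis_state R A' m') =
  ((p ^ n)%:R)^-1 * \sum_(u : V) (basis_phase A m u)^* * basis_phase A' m' u.
Proof.
have plus_n_normsq : ((sqrtC (p%:R : R[i]))^-1 ^+ n)^* * (sqrtC p%:R)^-1 ^+ n
    = ((p ^ n)%:R)^-1.
  rewrite geC0_conj ?exprn_ge0 ?invr_ge0 ?sqrtC_ge0 ?ler0n //.
  by rewrite -exprMn -invfM -expr2 sqrtCK exprVn natrX.
rewrite /braket -plus_n_normsq [in RHS](reindex of_cbasis);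
  last exact: onW_bij _ of_cbasis_bij.
rewrite mulr_sumr; apply: eq_bigr => x _.
by rewrite !graph_basis_stateE rmorphM /plus_n; ring.
Qed.

End GraphStates.

Theorem lemma1 (R : realType) (p n : nat) (hp : prime p) (hn : (1 <= n)%N)
  (Ar As : 'M['F_p]_n) (symr : Ar^T = Ar) (syms : As^T = As)
  (hdet : \det (Ar - As) != 0) :
  forall m m' : 'I_n -> 'F_p,
    `|braket (graph_basis_state R Ar m) (graph_basis_state R As m')| ^+ 2
      = ((p ^ n)%:R)^-1.
Proof.
move=> m m'; pose H u := (basis_phase R p n Ar m u)^* * basis_phase R p n As m' u.
have H_unimod u : H u * (H u)^* = 1.
  exact/conjM_mulconj/basis_phase_mulconj/basis_phase_mulconj.
have HD z v : H (z + v) = H z * H v * chi R p (@dot p n (z *m (As - Ar)) v).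
  rewrite /H !basis_phaseD // mulmxBr dotBl [in RHS](chiD R p hp) (chiN R p hp).
  by rewrite !rmorphM /=; ring.
have unit_diff : (As - Ar) \in unitmx.
  rewrite unitmxE unitfE -opprB -scaleN1r detZ mulf_neq0 //.
  by rewrite expf_neq0 // oppr_eq0 oner_eq0.
have pn_neq0 : ((p ^ n)%:R : R[i]) != 0.
  by rewrite pnatr_eq0 expn_eq0 negb_and -lt0n prime_gt0.
have normsq_sum : (\sum_u H u) * (\sum_u H u)^* = (p ^ n)%:R.
  exact: (@bilinear_phase_sum_normsq R p hp n H _ unit_diff H_unimod HD).
rewrite normCK (braket_graph_basis_state _ _ hp) rmorphM /=.
rewrite geC0_conj ?invr_ge0 ?ler0n // mulrACA normsq_sum.
by rewrite -mulrA mulVf // mulr1.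
Qed.
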